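(* Let $n\ge 4$, let $\lambda=(\lambda_1,\lambda_2)$ with integers $\lambda_1\ge\lambda_2\ge 0$, and let $(\lambda,i,j,k)$ be admissible. For fixed $w \in W$, the expression $\langle w, \psi_{\lambda,(i,j,k)}(\{x_1,\dots,x_i\})(\gamma)\rangle$ is a polynomial in the entries of the orthogonal matrix $\gamma \in \mathrm{O}(n)$ and of the vectors $x_1,\dots,x_i$.
   Context: Setting. Fix an angle $\theta$ and consider the graph on $S^{n-1}$ in which distinct $x,y$ are adjacent if $\langle x,y\rangle > \cos\theta$; $\mathcal{I}_2$ is the set of independent sets of this graph of cardinality at most $2$, and $\mathcal{I}_{=i}$ those of cardinality exactly $i$. $\mathrm{O}(n,\mathbb{C})$ denotes complex $n\times n$ matrices $g$ with $g^{\sf T}g = I$, $\mathrm{O}(n)$ the real ones. Let $U=\mathbb{C}^2$ with basis $e_1,e_2$, $m = \lambda_1-\lambda_2$, $W = \mathrm{Sym}^{\lambda_2}(\wedge^2U)\otimes\mathrm{Sym}^m(U)$ with induced action $\rho$ of $2\times 2$ complex matrices, orthonormal basis $w_k = (e_1\wedge e_2)^{\lambda_2}e_1^{m-k}e_2^k$ ($0\le k\le m$), and $c_1(k) = \lambda_2+m-k$, $c_2(k) = \lambda_2+k$. Let $\omega = (I_2\ \ iI_2\ \ 0)$ ($2\times n$) and $\epsilon = \binom{I_2}{0}$ ($n\times 2$); for $w\in W$, $f_w(\gamma) = \rho(\omega\gamma\epsilon)w$ for $\gamma\in \mathrm{O}(n,\mathbb{C})$; $V$ is the span of the right translates $\gamma\mapsto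 f_w(\gamma g)$, $g \in \mathrm{O}(n,\mathbb{C})$, $\pi$ the right-translation representation of $\mathrm{O}(n)$ on $V$, $\Psi(w) = f_w$. For $J = \{x,y\}\in\mathcal{I}_2$ (with $x=y$ if $|J|=1$): $p_j(J) = \langle x,y\rangle^j$, $q_1(J) = \sqrt{2+2\langle x,y\rangle}$, $q_2(J) = \sqrt{2-2\langle x,y\rangle}$; orbit representative $R_J = \{(q_1/2,q_2/2,0,\dots,0),(q_1/2,-q_2/2,0,\dots,0)\}$ for $|J|\ge1$ and $\emptyset$ for $J=\emptyset$; a section is $s\colon\mathcal{I}_2\to\mathrm{O}(n)$ with $s(J)R_J = J$. Admissible tuples: $i=0$: $\lambda=(0,0)$, $j=k=0$; $i=1$: $\lambda_2=0$, $j=k=0$; $i=2$: $j\ge0$, $0\le k\le m$, $\lambda_2+k$ even. Define $\psi_{\lambda,(i,j,k)}(J) = \xi_{\lambda,i,j,k}(J)\pi(s(J))\Psi(w_k)$ with $\xi = 1$ if $i=|J|<2$, $\xi = p_j(J)q_1(J)^{c_1(k)}q_2(J)^{c_2(k)}$ if $i=|J|=2$, and $\xi=0$ otherwise (with $0^0 = 1$); this does not depend on the choice of section. *)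

From HB Require Import structures.
From mathcomp Require Import all_boot all_algebra.
From mathcomp Require Import reals.
From mathcomp Require Import complex.
From mathcomp Require Export mpoly.
Export GRing.Theory Num.Theory.

Set Implicit Arguments.
Unset Strict Implicit.
Unset Printing Implicit Defensive.

Local Open Scope ring_scope.
Local Open Scope complex_scope.

Section Defs.
Variables (R : realType) (n : nat).
Local Notation C := (R[i]).

Definition ipr (x y : 'rV[R]_n) : R := \sum_(l < n) x 0 l * y 0 l.

Definition orthO (g : 'M[R]_n) : Prop := g^T *m g = 1%:M.

(* the points x_1, ..., x_i of J = {x_1,...,x_i}, given as the rows of X *)
Definition rowsJ (i : nat) (X : 'M[R]_(i, n)) : seq 'rV[R]_n :=
  [seq row a X | a <- enum 'I_i].

(* J = {x_1,...,x_i} is an element of I_{=i} for the graph with threshold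
   c = cos theta: unit vectors, pairwise distinct, pairwise non-adjacent *)
Definition in_I_eq (c : R) (i : nat) (X : 'M[R]_(i, n)) : Prop :=
  (forall a : 'I_i, ipr (row a X) (row a X) = 1) /\
  (forall a b : 'I_i, a != b ->
      row a X != row b X /\ ipr (row a X) (row b X) <= c).

(* p_1(J) = <x,y> where J = {x,y} (x = y if |J| = 1) *)
Definition pJ (i : nat) (X : 'M[R]_(i, n)) : R :=
  ipr (nth 0 (rowsJ X) 0) (nth 0 (rowsJ X) i.-1).

Definition q1 (t : R) : R := Num.sqrt (2 + 2 * t).
Definition q2 (t : R) : R := Num.sqrt (2 - 2 * t).

(* orbit representative R_J, as an i x n matrix whose rows are its points:
   row 0 = (q1/2, q2/2, 0, ..., 0), row 1 = (q1/2, -q2/2, 0, ..., 0) *)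
Definition RJ (i : nat) (X : 'M[R]_(i, n)) : 'M[R]_(i, n) :=
  \matrix_(a < i, l < n)
    (if (l : nat) == 0%N then q1 (pJ X) / 2
     else if (l : nat) == 1%N then
       (if (a : nat) == 0%N then q2 (pJ X) / 2 else - (q2 (pJ X) / 2))
     else 0).

(* g is an admissible value s(J) of a section: g in O(n) and g R_J = J
   (g acts on column vectors, i.e. on a row vector r by r *m g^T) *)
Definition section_value (i : nat) (X : 'M[R]_(i, n)) (g : 'M[R]_n) : Prop :=
  orthO g /\ rowsJ (RJ X *m g^T) =i rowsJ X.

Definition omega : 'M[C]_(2, n) :=
  \matrix_(a < 2, l < n)
    (if (l : nat) == (a : nat) then 1
     else if (l : nat) == (a + 2)%N then 'i else 0).
Definition epsilon : 'M[C]_(n, 2) :=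
  \matrix_(l < n, b < 2) ((l : nat) == (b : nat))%:R.

Definition toC (p q : nat) (M : 'M[R]_(p, q)) : 'M[C]_(p, q) :=
  map_mx (fun x => x%:C) M.

End Defs.

(* The representation rho of 2x2 complex matrices on
   W = Sym^{l2}(wedge^2 U) (x) Sym^m(U), in the orthonormal basis
   w_k = (e1 /\ e2)^{l2} e1^{m-k} e2^k:  rho_entry l2 m A l k is the
   w_l-coordinate of rho(A) w_k, i.e.
   det(A)^{l2} * [coefficient of e1^{m-l} e2^l in (A e1)^{m-k} (A e2)^k],
   computed by dehomogenizing e1 := 1, e2 := 'X. *)
Definition rho_entry (R : realType) (l2 m : nat) (A : 'M[R[i]]_2) (l k : nat)
  : R[i] :=
  \det A ^+ l2 *
  ((((A 0 0)%:P + (A 1 0)%:P * 'X) ^+ (m - k) *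
    ((A 0 1)%:P + (A 1 1)%:P * 'X) ^+ k)`_l).

Definition admissible (l1 l2 i j k : nat) : Prop :=
  [/\ i = 0%N, l1 = 0%N, l2 = 0%N, j = 0%N & k = 0%N] \/
  [/\ i = 1%N, l2 = 0%N, j = 0%N & k = 0%N] \/
  [/\ i = 2%N, (k <= l1 - l2)%N & ~~ odd (l2 + k)].

Definition xi (R : realType) (n l1 l2 i j k : nat) (X : 'M[R]_(i, n)) : R :=
  if (i < 2)%N then 1
  else if i == 2%N then
    pJ X ^+ j * q1 (pJ X) ^+ (l2 + (l1 - l2) - k) * q2 (pJ X) ^+ (l2 + k)
  else 0.

(* psi_{lambda,(i,j,k)}(J)(gamma) = xi(J) * rho(omega gamma s(J) epsilon) w_k,
   as a vector of W = C^{m+1} (coordinates in the basis w_0..w_m) *)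
Definition psi_val (R : realType) (n l1 l2 i j k : nat)
  (X : 'M[R]_(i, n)) (g gamma : 'M[R]_n) : 'I_((l1 - l2).+1) -> R[i] :=
  fun l => (@xi R n l1 l2 i j k X)%:C *
    rho_entry l2 (l1 - l2) (@omega R n *m toC (gamma *m g) *m @epsilon R n) l k.

Definition ipW (R : realType) (m : nat) (w v : 'I_m.+1 -> R[i]) : R[i] :=
  \sum_(l < m.+1) w l * (v l)^*.

Definition vars (R : realType) (n i : nat) (gamma : 'M[R]_n)
  (X : 'M[R]_(i, n)) : 'I_(n * n + i * n) -> R[i] :=
  fun v => ((row_mx (mxvec gamma) (mxvec X)) 0 v)%:C.

From HB Require Import structures.
From mathcomp Require Import all_boot all_algebra.
From mathcomp Require Import reals complex mpoly.
From mathcomp Require Import ring.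
Set Implicit Arguments.
Unset Strict Implicit.
Unset Printing Implicit Defensive.
Local Open Scope ring_scope.
Local Open Scope complex_scope.

(* For |J| = 2 with points x, y, let G be the first two columns of s(J).  As
   s(J) maps R_J onto J, the columns of G scaled by q_1(J) and q_2(J) are x + y
   and +-(x - y).  Now rho(A diag(a, b)) w_k = a^c_1(k) b^c_2(k) rho(A) w_k and
   c_2(k) is even, so the factor q_1^c_1(k) q_2^c_2(k) of xi cancels this
   scaling and psi(J)(gamma) = <x,y>^j rho(omega gamma (x + y, x - y)) w_k,
   which is polynomial in gamma, x, y; the choice of section and the square
   roots have disappeared.  For |J| = 1 the first column of G is x and only
   that column matters (lambda_2 = k = 0); for J empty psi is constant.
   Finally <w, _> conjugates coefficients only, the variables being real. *)

Section PolynomialFunction.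
Variables (C : comNzRingType) (N : nat) (T : Type) (v : T -> 'I_N -> C).

Definition polyfun (f : T -> C) := exists P : {mpoly C[N]}, forall t, f t = P.@[v t].

Lemma eq_polyfun f g : polyfun f -> f =1 g -> polyfun g.
Proof. by move=> [P fP] fg; exists P => t; rewrite -fg. Qed.

Lemma polyfun_cst c : polyfun (fun=> c).
Proof. by exists c%:MP => t; rewrite mevalC. Qed.

Lemma polyfun_var a : polyfun (v^~ a).
Proof. by exists 'X_a => t; rewrite mevalXU. Qed.

Lemma polyfunD f g : polyfun f -> polyfun g -> polyfun (fun t => f t + g t).
Proof. by move=> [P fP] [Q gQ]; exists (P + Q) => t; rewrite mevalD fP gQ. Qed.

Lemma polyfunM f g : polyfun f -> polyfun g -> polyfun (fun t => f t * g t).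
Proof. by move=> [P fP] [Q gQ]; exists (P * Q) => t; rewrite mevalM fP gQ. Qed.

Lemma polyfunX f e : polyfun f -> polyfun (fun t => f t ^+ e).
Proof.
move=> pf; elim: e => [|e IHe].
  by apply: (eq_polyfun (polyfun_cst 1)) => t; rewrite expr0.
by apply: (eq_polyfun (polyfunM pf IHe)) => t; rewrite exprS.
Qed.

Lemma polyfun_sum I (r : seq I) (P : pred I) (F : I -> T -> C) :
  (forall a, polyfun (F a)) -> polyfun (fun t => \sum_(a <- r | P a) F a t).
Proof.
move=> pF; elim: r => [|a r IHr].
  by apply: (eq_polyfun (polyfun_cst 0)) => t; rewrite big_nil.
case: (boolP (P a)) => [Pa | nPa].
  by apply: (eq_polyfun (polyfunD (pF a) IHr)) => t; rewrite big_cons Pa.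
by apply: (eq_polyfun IHr) => t; rewrite big_cons (negPf nPa).
Qed.

Lemma polyfun_prod I (r : seq I) (P : pred I) (F : I -> T -> C) :
  (forall a, polyfun (F a)) -> polyfun (fun t => \prod_(a <- r | P a) F a t).
Proof.
move=> pF; elim: r => [|a r IHr].
  by apply: (eq_polyfun (polyfun_cst 1)) => t; rewrite big_nil.
case: (boolP (P a)) => [Pa | nPa].
  by apply: (eq_polyfun (polyfunM (pF a) IHr)) => t; rewrite big_cons Pa.
by apply: (eq_polyfun IHr) => t; rewrite big_cons (negPf nPa).
Qed.

Lemma polyfun_rmorph (phi : {rmorphism C -> C}) f :
  (forall t a, phi (v t a) = v t a) -> polyfun f -> polyfun (phi \o f).
Proof.
move=> phi_v [P fP]; exists (\sum_(m <- msupp P) phi P@_m *: 'X_[m]) => t.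
rewrite /= fP mevalE !rmorph_sum; apply: eq_bigr => m _ /=.
rewrite mevalZ mevalX !rmorphM rmorph_prod; congr (_ * _).
by apply: eq_bigr => a _; rewrite rmorphXn phi_v.
Qed.

Definition polyfun_mx p q (M : T -> 'M[C]_(p, q)) :=
  forall a b, polyfun (fun t => M t a b).

Lemma polyfun_mx_cst p q (M : 'M[C]_(p, q)) : polyfun_mx (fun=> M).
Proof. by move=> a b; apply: polyfun_cst. Qed.

Lemma polyfun_mulmx p q r (A : T -> 'M[C]_(p, q)) (B : T -> 'M[C]_(q, r)) :
  polyfun_mx A -> polyfun_mx B -> polyfun_mx (fun t => A t *m B t).
Proof.
move=> pA pB a b; apply: (eq_polyfun (polyfun_sum _ _ (fun c => polyfunM (pA a c) (pB c b)))).
by move=> t; rewrite mxE.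
Qed.

Lemma polyfun_det p (A : T -> 'M[C]_p) :
  polyfun_mx A -> polyfun (fun t => \det (A t)).
Proof.
move=> pA; apply: polyfun_sum => s; apply: polyfunM; first exact: polyfun_cst.
by apply: polyfun_prod => a; apply: pA.
Qed.

Definition polyfun_poly (p : T -> {poly C}) := forall l, polyfun (fun t => (p t)`_l).

Lemma polyfun_polyC f : polyfun f -> polyfun_poly (fun t => (f t)%:P).
Proof.
move=> pf [|l]; first by apply: (eq_polyfun pf) => t; rewrite coefC.
by apply: (eq_polyfun (polyfun_cst 0)) => t; rewrite coefC.
Qed.

Lemma polyfun_polyX : polyfun_poly (fun=> 'X).
Proof. by move=> l; apply: polyfun_cst. Qed.

Lemma polyfun_polyD p q :
  polyfun_poly p -> polyfun_poly q -> polyfun_poly (fun t => p t + q t).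
Proof.
by move=> pp pq l; apply: (eq_polyfun (polyfunD (pp l) (pq l))) => t; rewrite coefD.
Qed.

Lemma polyfun_polyM p q :
  polyfun_poly p -> polyfun_poly q -> polyfun_poly (fun t => p t * q t).
Proof.
move=> pp pq l.
apply: (eq_polyfun (polyfun_sum _ _ (fun a : 'I_l.+1 => polyfunM (pp a) (pq (l - a)%N)))).
by move=> t; rewrite coefM.
Qed.

Lemma polyfun_poly_expr p e : polyfun_poly p -> polyfun_poly (fun t => p t ^+ e).
Proof.
move=> pp; elim: e => [|e IHe].
  by move=> l; apply: (eq_polyfun (polyfun_polyC (polyfun_cst 1) l)) => t; rewrite expr0.
by move=> l; apply: (eq_polyfun (polyfun_polyM pp IHe l)) => t; rewrite exprS.
Qed.

End PolynomialFunction.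

Lemma polyfun_ipW (R : realType) N T (v : T -> 'I_N -> R[i]) m (w : 'I_m.+1 -> R[i])
    (F : 'I_m.+1 -> T -> R[i]) :
  (forall t a, (v t a)^* = v t a) -> (forall l, polyfun v (F l)) ->
  polyfun v (fun t => ipW w (fun l => F l t)).
Proof.
move=> v_real pF; apply: polyfun_sum => l.
apply: polyfunM; first exact: polyfun_cst.
exact: polyfun_rmorph v_real (pF l).
Qed.

Definition diag2 (S : pzRingType) (x y : S) : 'M[S]_2 :=
  diag_mx (\row_b (if b == 0 then x else y)).

Section RhoEntry.
Variables (R : realType) (l2 m : nat).
Local Notation C := R[i].

Lemma polyfun_rho_entry N T (v : T -> 'I_N -> C) (A : T -> 'M[C]_2) l k :
  polyfun_mx v A -> polyfun v (fun t => rho_entry l2 m (A t) l k).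
Proof.
move=> pA; apply: polyfunM; first exact/polyfunX/polyfun_det.
have pcol b : polyfun_poly v (fun t => (A t 0 b)%:P + (A t 1 b)%:P * 'X).
  by apply: polyfun_polyD; [|apply: polyfun_polyM; [|exact: polyfun_polyX]];
    apply: polyfun_polyC.
by apply: polyfun_polyM; apply: polyfun_poly_expr.
Qed.

Lemma rho_entry_scale (A : 'M[C]_2) x y l k : (k <= m)%N ->
  rho_entry l2 m (A *m diag2 x y) l k =
  x ^+ (l2 + m - k) * y ^+ (l2 + k) * rho_entry l2 m A l k.
Proof.
move=> le_km; rewrite /rho_entry det_mulmx det_diag big_ord_recl big_ord1 !mul_mx_diag !mxE /=.
have colM (b : 'I_2) (z : C) : (A 0 b * z)%:P + (A 1 b * z)%:P * 'X =
                               z%:P * ((A 0 b)%:P + (A 1 b)%:P * 'X).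
  by rewrite !polyCM; ring.
rewrite !colM !exprMn -!rmorphXn mulrACA -rmorphM coefCM -addnBA // !exprD.
ring.
Qed.

Lemma eq_rho_entry_col0 (A B : 'M[C]_2) l :
  (forall a, A a 0 = B a 0) -> rho_entry 0 m A l 0 = rho_entry 0 m B l 0.
Proof. by move=> eA; rewrite /rho_entry !expr0 !eA. Qed.

Lemma rho_entry_trivial (A : 'M[C]_2) l : rho_entry 0 0 A l 0 = (l == 0%N)%:R.
Proof. by rewrite /rho_entry !expr0 !mul1r coef1. Qed.

End RhoEntry.

Lemma ord2P (b : 'I_2) : b = 0 \/ b = 1.
Proof. by case: b => [[|[|//]] ?]; [left | right]; apply/val_inj. Qed.

Lemma row_eq_entry (S : Type) p q (A B : 'M[S]_(p, q)) a b :
  row a A = row b B -> forall l, A a l = B b l.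
Proof. by move=> /rowP e l; have := e l; rewrite !mxE. Qed.

Lemma eq_mulmx_col (S : pzSemiRingType) p q r (A : 'M[S]_(p, q)) (B B' : 'M[S]_(q, r)) b :
  (forall l, B l b = B' l b) -> forall a, (A *m B) a b = (A *m B') a b.
Proof. by move=> eB a; rewrite !mxE; apply: eq_bigr => l _; rewrite eB. Qed.

Section Frames.
Variables (R : realType) (n : nat).

Definition real_epsilon : 'M[R]_(n, 2) := \matrix_(l, b) ((l : nat) == b)%:R.

Lemma toC_mul p q r (A : 'M[R]_(p, q)) (B : 'M[R]_(q, r)) :
  toC (A *m B) = toC A *m toC B.
Proof. exact: map_mxM. Qed.

Lemma toCE p q (M : 'M[R]_(p, q)) a b : toC M a b = (M a b)%:C.
Proof. exact: mxE. Qed.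

Lemma omega_frame (gamma g : 'M[R]_n) :
  omega R n *m toC (gamma *m g) *m epsilon R n =
  omega R n *m toC (gamma *m (g *m real_epsilon)).
Proof.
have -> : epsilon R n = toC real_epsilon by apply/matrixP => l b; rewrite !mxE rmorph_nat.
by rewrite !toC_mul !mulmxA.
Qed.

Lemma RJ_mul_trE i (X : 'M[R]_(i, n)) (g : 'M[R]_n) a l :
  (RJ X *m g^T) a l = (q1 (pJ X) * (g *m real_epsilon) l 0 +
     (-1) ^+ ((a : nat) != 0%N) * q2 (pJ X) * (g *m real_epsilon) l 1) / 2.
Proof.
rewrite !mxE !mulr_sumr -big_split mulr_suml; apply: eq_bigr => m _.
rewrite !mxE; case: m => [[|[|m]] lt_mn] /=; rewrite ?mulr0 ?mulr1 ?mul0r.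
- by field.
- by case: (a : nat) => [|a'] /=; rewrite ?expr0 ?expr1; field.
- by rewrite addr0 mul0r.
Qed.

Lemma rowsJ1 (X : 'M[R]_(1, n)) : rowsJ X = [:: row 0 X].
Proof. by rewrite /rowsJ enum_ordSl enum_ord0. Qed.

Lemma rowsJ2 (X : 'M[R]_(2, n)) : rowsJ X = [:: row 0 X; row 1 X].
Proof.
by rewrite /rowsJ enum_ordSl enum_ordSl enum_ord0 /=; congr [:: _; row _ X]; apply/val_inj.
Qed.

Lemma pJ2E (X : 'M[R]_(2, n)) : pJ X = (X *m X^T) 0 1.
Proof. by rewrite /pJ rowsJ2 !mxE; apply: eq_bigr => l _; rewrite !mxE. Qed.

Lemma rowsJ2_eq_swap (M X : 'M[R]_(2, n)) : row 0 X != row 1 X -> rowsJ M =i rowsJ X ->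
  (row 0 M = row 0 X /\ row 1 M = row 1 X) \/ (row 0 M = row 1 X /\ row 1 M = row 0 X).
Proof.
move=> neqX eqM.
have inX r : r \in rowsJ M -> r = row 0 X \/ r = row 1 X.
  by rewrite eqM rowsJ2 !inE => /orP[] /eqP; [left | right].
have [inM0 inM1] : row 0 X \in rowsJ M /\ row 1 X \in rowsJ M.
  by rewrite !eqM rowsJ2 !inE !eqxx orbT.
rewrite rowsJ2 !inE in inM0 inM1.
have /inX [r0 | r0] : row 0 M \in rowsJ M by rewrite rowsJ2 mem_head.
all: have /inX [r1 | r1] : row 1 M \in rowsJ M by rewrite rowsJ2 !inE eqxx orbT.
- by move: inM1; rewrite r0 r1 orbb => /eqP e; rewrite e eqxx in neqX.
- by left.
- by right.
- by move: inM0; rewrite r0 r1 orbb => /eqP e; rewrite e eqxx in neqX.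
Qed.

Definition hadamard2 : 'M[R]_2 := \matrix_(a, b) (-1) ^+ (a * b).

Lemma tr_mul_hadamard2 (X : 'M[R]_(2, n)) l b :
  (X^T *m hadamard2) l b = X 0 l + (-1) ^+ b * X 1 l.
Proof.
rewrite !mxE big_ord_recl big_ord1 !mxE /= expr0 mulr1 mulrC mul1n.
by congr (_ + _ * X _ l); apply/val_inj.
Qed.

Lemma section_frame2 (X : 'M[R]_(2, n)) (g : 'M[R]_n) :
  row 0 X != row 1 X -> section_value X g ->
  exists2 s : R, s ^+ 2 = 1 &
    g *m real_epsilon *m diag2 (q1 (pJ X)) (q2 (pJ X)) = X^T *m hadamard2 *m diag2 1 s.
Proof.
move=> neqX [_ /(rowsJ2_eq_swap neqX) rowsM].
set M := RJ X *m g^T; set G := g *m real_epsilon.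
suff frameE s : (forall l, M 0 l + M 1 l = X 0 l + X 1 l /\
                           M 0 l - M 1 l = s * (X 0 l - X 1 l)) ->
    G *m diag2 (q1 (pJ X)) (q2 (pJ X)) = X^T *m hadamard2 *m diag2 1 s.
  case: rowsM => [[/row_eq_entry M0 /row_eq_entry M1] | [/row_eq_entry M0 /row_eq_entry M1]].
    by exists 1; [rewrite expr1n | apply: frameE => l; rewrite M0 M1 mul1r].
  exists (-1); first by rewrite sqrrN expr1n.
  by apply: frameE => l; rewrite M0 M1 addrC; split=> //; ring.
move=> MX; apply/matrixP => l b.
have [sumG difG] : M 0 l + M 1 l = q1 (pJ X) * G l 0 /\ M 0 l - M 1 l = q2 (pJ X) * G l 1.
  by rewrite !RJ_mul_trE /= expr0 expr1; split; field.
have [sumX difX] := MX l; clearbody G.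
rewrite !mul_mx_diag [LHS]mxE [RHS]mxE tr_mul_hadamard2 !mxE.
have [-> | ->] := ord2P b; rewrite /= mulrC ?expr0 ?expr1 ?mulr1.
  by rewrite -sumG sumX mul1r.
by rewrite -difG difX mulrC mulN1r.
Qed.

Lemma q1_1 : q1 (1 : R) = 2.
Proof. by rewrite /q1 mulr1 (_ : 2 + 2 = 2 ^+ 2) ?sqrtr_sqr ?ger0_norm //; ring. Qed.

Lemma q2_1 : q2 (1 : R) = 0.
Proof. by rewrite /q2 mulr1 subrr sqrtr0. Qed.

Lemma section_frame1 (X : 'M[R]_(1, n)) (g : 'M[R]_n) :
  ipr (row 0 X) (row 0 X) = 1 -> section_value X g ->
  forall l, (g *m real_epsilon) l 0 = X 0 l.
Proof.
move=> unitX [_ rowsM] l.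
have pJ1 : pJ X = 1 by rewrite /pJ rowsJ1.
have : row 0 (RJ X *m g^T) \in rowsJ X by rewrite -rowsM rowsJ1 mem_head.
rewrite rowsJ1 inE => /eqP/row_eq_entry/(_ l).
by rewrite RJ_mul_trE pJ1 q1_1 q2_1 => <-; field.
Qed.

End Frames.
Arguments real_epsilon {R n}.
Arguments hadamard2 {R}.

Lemma expr_even_sqr1 (S : pzRingType) (s : S) e : s ^+ 2 = 1 -> ~~ odd e -> s ^+ e = 1.
Proof. by move=> s2 even_e; rewrite -(even_halfK even_e) -mul2n exprM s2 expr1n. Qed.

Section PsiClosedForms.
Variables (R : realType) (n : nat).

Lemma toC_diag2 (x y : R) : toC (diag2 x y) = diag2 x%:C y%:C.
Proof. by apply/matrixP => a b; rewrite !mxE rmorphMn fun_if. Qed.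

Lemma psi_val2E (X : 'M[R]_(2, n)) g gamma l1 l2 j k l :
  (k <= l1 - l2)%N -> ~~ odd (l2 + k) -> row 0 X != row 1 X -> section_value X g ->
  @psi_val R n l1 l2 2 j k X g gamma l =
  (pJ X ^+ j)%:C * rho_entry l2 (l1 - l2) (omega R n *m toC (gamma *m (X^T *m hadamard2))) l k.
Proof.
move=> le_km even_c2 neqX secg; have [s s2 frameE] := section_frame2 neqX secg.
have := congr1 (fun G => rho_entry l2 (l1 - l2) (omega R n *m toC (gamma *m G)) l k) frameE.
rewrite /psi_val /xi /= omega_frame !mulmxA !toC_mul !mulmxA !toC_diag2 !rho_entry_scale //.
rewrite -!(rmorphXn (real_complex R)) expr1n (expr_even_sqr1 s2) // rmorph1 !mul1r => <-.
by rewrite !rmorphM !rmorphXn !mulrA.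
Qed.

Lemma psi_val1E (X : 'M[R]_(1, n)) g gamma l1 l :
  ipr (row 0 X) (row 0 X) = 1 -> section_value X g ->
  @psi_val R n l1 0 1 0 0 X g gamma l =
  rho_entry 0 (l1 - 0) (omega R n *m toC (gamma *m (X^T *m const_mx 1))) l 0.
Proof.
move=> unitX secg; rewrite /psi_val /xi /= rmorph1 mul1r omega_frame.
apply: eq_rho_entry_col0; apply: eq_mulmx_col => b; rewrite !toCE; congr _%:C.
by apply: eq_mulmx_col => l'; rewrite (section_frame1 unitX secg) mxE big_ord1 !mxE mulr1.
Qed.

Lemma psi_val0E (X : 'M[R]_(0, n)) g gamma l :
  @psi_val R n 0 0 0 0 0 X g gamma l = ((l : nat) == 0%N)%:R.
Proof. by rewrite /psi_val /xi /= rmorph1 mul1r rho_entry_trivial. Qed.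

End PsiClosedForms.

Section Polynomiality.
Variables (R : realType) (n i : nat).
Local Notation T := ('M[R]_n * 'M[R]_(i, n))%type.
Local Notation polyGX := (polyfun (fun t : T => vars t.1 t.2)).
Local Notation polyGX_mx := (polyfun_mx (fun t : T => vars t.1 t.2)).

Lemma polyfun_gamma : polyGX_mx (fun t => toC t.1).
Proof.
move=> a b; apply: (eq_polyfun (polyfun_var _ (lshift (i * n) (mxvec_index a b)))) => t.
by rewrite /vars row_mxEl mxvecE toCE.
Qed.

Lemma polyfun_X : polyGX_mx (fun t => toC t.2).
Proof.
move=> a b; apply: (eq_polyfun (polyfun_var _ (rshift (n * n) (mxvec_index a b)))) => t.
by rewrite /vars row_mxEr mxvecE toCE.
Qed.

Lemma polyfun_X_tr : polyGX_mx (fun t => toC t.2^T).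
Proof. by move=> a b; apply: (eq_polyfun (polyfun_X b a)) => t; rewrite !toCE mxE. Qed.

Lemma polyfun_toC_mul p q r (A : T -> 'M[R]_(p, q)) (B : T -> 'M[R]_(q, r)) :
  polyGX_mx (fun t => toC (A t)) -> polyGX_mx (fun t => toC (B t)) ->
  polyGX_mx (fun t => toC (A t *m B t)).
Proof.
move=> pA pB a b; apply: (eq_polyfun (polyfun_mulmx pA pB a b)) => t.
by rewrite toC_mul.
Qed.

Lemma polyfun_rho_frame (Y : T -> 'M[R]_(n, 2)) l2 m l k :
  polyGX_mx (fun t => toC (Y t)) ->
  polyGX (fun t => rho_entry l2 m (omega R n *m toC (t.1 *m Y t)) l k).
Proof.
move=> pY; apply/polyfun_rho_entry/polyfun_mulmx; first exact: polyfun_mx_cst.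
exact: polyfun_toC_mul polyfun_gamma pY.
Qed.

Lemma psi_val_polynomial c l1 l2 j k (F : 'I_(l1 - l2).+1 -> T -> R[i]) :
  (forall l, polyGX (F l)) ->
  (forall gamma X g, in_I_eq c X -> section_value X g ->
     forall l, @psi_val R n l1 l2 i j k X g gamma l = F l (gamma, X)) ->
  forall w, exists P : {mpoly R[i][n * n + i * n]},
  forall gamma X g, orthO gamma -> in_I_eq c X -> section_value X g ->
    ipW w (@psi_val R n l1 l2 i j k X g gamma) = P.@[vars gamma X].
Proof.
move=> pF psiE w; have [P PE] := polyfun_ipW w (fun t a => conjc_real _) pF.
exists P => gamma X g _ IX secg; rewrite -(PE (gamma, X)).
by apply: eq_bigr => l _; rewrite (psiE _ _ _ IX secg).
Qed.

End Polynomiality.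

Lemma polyfun_pJ2 (R : realType) n :
  polyfun (fun t : 'M[R]_n * 'M[R]_(2, n) => vars t.1 t.2) (fun t => (pJ t.2)%:C).
Proof.
apply: (eq_polyfun (polyfun_toC_mul (@polyfun_X R n 2) (@polyfun_X_tr R n 2) 0 1)) => t.
by rewrite pJ2E toCE.
Qed.

Theorem mainTheorem6 (R : realType) (c : R) (n l1 l2 i j k : nat) :
  (4 <= n)%N -> (l2 <= l1)%N -> admissible l1 l2 i j k ->
  forall w : 'I_((l1 - l2).+1) -> R[i],
  exists P : {mpoly R[i][n * n + i * n]},
  forall (gamma : 'M[R]_n) (X : 'M[R]_(i, n)) (g : 'M[R]_n),
    orthO gamma -> in_I_eq c X -> section_value X g ->
    ipW w (@psi_val R n l1 l2 i j k X g gamma) = P.@[vars gamma X].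
Proof.
move=> _ _ [[-> -> -> -> ->] | [[-> -> -> ->] | [-> le_km even_c2]]].
- apply: (psi_val_polynomial (F := fun l _ => ((l : nat) == 0%N)%:R)).
    by move=> l; apply: polyfun_cst.
  by move=> gamma X g _ _ l; apply: psi_val0E.
- apply: (psi_val_polynomial (F := fun l t =>
    rho_entry 0 (l1 - 0) (omega R n *m toC (t.1 *m (t.2^T *m const_mx 1))) l 0)).
    by move=> l; apply/polyfun_rho_frame/polyfun_toC_mul;
      [exact: polyfun_X_tr | exact: polyfun_mx_cst].
  by move=> gamma X g [unitX _] secg l; apply: psi_val1E.
- apply: (psi_val_polynomial (F := fun l t => (pJ t.2 ^+ j)%:C *
    rho_entry l2 (l1 - l2) (omega R n *m toC (t.1 *m (t.2^T *m hadamard2))) l k)).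
    move=> l; apply: polyfunM; last apply/polyfun_rho_frame/polyfun_toC_mul;
      [| exact: polyfun_X_tr | exact: polyfun_mx_cst].
    by apply: (eq_polyfun (polyfunX j (@polyfun_pJ2 R n))) => t; rewrite rmorphXn.
  move=> gamma X g [_ distX] secg l; apply: psi_val2E => //.
  by have [] := distX 0 1.
Qed.
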